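(* There exist constants $k>0$ and $\epsilon>0$ such that for every finite non-empty set $J$ of vertices of the hexacarpet $H$, $|\partial J|\ge k|J|^{\epsilon}$. Here $\partial J$ is the set of edges of $H$ with exactly one endpoint in $J$.
   Context: Barycentric subdivisions: $T_0$ is an equilateral triangle with vertices $v_0,v_1,v_2$. $T_n$ is obtained by subdividing every triangular face $\{x,y,z\}$ of $T_{n-1}$ into the six triangles $\{x,m_{xy},c\},\{m_{xy},y,c\},\{y,m_{yz},c\},\{m_{yz},z,c\},\{z,m_{zx},c\},\{m_{zx},x,c\}$, where $m_{uv}$ are side midpoints and $c$ is the barycenter. $H_n$ is the graph whose vertices are the $6^n$ triangular faces of $T_n$, with an edge between two faces for each side they share. This is the planar dual of $T_n$ with the vertex for the unbounded face deleted. $H_{n+1}$ consists of six copies of $H_n$, one per face of $T_1$. $H_n$ is identified with the copy corresponding to the face $\{v_0,b_{01},b\}$ of $T_1$, where $b_{01}$ is the midpoint of $v_0v_1$ and $b$ is the barycenter. The hexacarpet $H$ is the increasing union of the $H_n$. *)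

From mathcomp Require Import all_boot all_algebra.

Local Open Scope ring_scope.

(* Points of the plane of T_0 in barycentric coordinates w.r.t. v0 v1 v2.
   Sharing sides is an affine notion, so this is the equilateral triangle. *)
Definition pt := (rat * rat * rat)%type.

Definition v0 : pt := (1, 0, 0).
Definition v1 : pt := (0, 1, 0).
Definition v2 : pt := (0, 0, 1).

Definition midp (p q : pt) : pt :=
  ((p.1.1 + q.1.1) / 2%:R, (p.1.2 + q.1.2) / 2%:R, (p.2 + q.2) / 2%:R).

Definition baryc (p q r : pt) : pt :=
  ((p.1.1 + q.1.1 + r.1.1) / 3%:R, (p.1.2 + q.1.2 + r.1.2) / 3%:R,
   (p.2 + q.2 + r.2) / 3%:R).

Definition face := (pt * pt * pt)%type.

Definition child (i : nat) (f : face) : face :=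
  let: (x, y, z) := f in
  let mxy := midp x y in let myz := midp y z in let mzx := midp z x in
  let c := baryc x y z in
  match i with
  | 0 => (x, mxy, c)
  | 1 => (mxy, y, c)
  | 2 => (y, myz, c)
  | 3 => (myz, z, c)
  | 4 => (z, mzx, c)
  | _ => (mzx, x, c)
  end.

(* Address of faces: a face of T_n is numbered by v < 6^n whose base-6 digits
   (n of them, most significant first) are the child indices from the top level
   down.  The face of T_{n+1} numbered v is child (v mod 6) of the face of T_n
   numbered v / 6.  Prepending the digit 0 (= the face {v0,b01,b} of T_1)
   does not change the number, which realises the identification of H_n with
   the copy of H_n inside the face {v0,b01,b}; hence the vertex set of the
   hexacarpet H = increasing union of the H_n is nat, with H_n = [0, 6^n). *)
Fixpoint face_of (n v : nat) : face :=
  match n with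
  | 0 => (v0, v1, v2)
  | n'.+1 => child (v %% 6) (face_of n' (v %/ 6))
  end.

Definition verts (f : face) : seq pt := [:: f.1.1; f.1.2; f.2].

Definition share_side (f g : face) : bool :=
  (2 <= count (fun p => p \in verts g) (verts f))%N.

Definition hex_adj (u v : nat) : Prop :=
  u <> v /\ exists n : nat,
    [/\ (u < 6 ^ n)%N, (v < 6 ^ n)%N & share_side (face_of n u) (face_of n v)].

(* Edges of H with exactly one endpoint in J, each represented by the
   ordered pair (endpoint in J, endpoint outside J).  Two distinct faces share
   at most one side, so this is a bijection with the edge boundary. *)
Definition hex_boundary (J : seq nat) (e : nat * nat) : Prop :=
  e.1 \in J /\ e.2 \notin J /\ hex_adj e.1 e.2.

From Stdlib Require Import Reals Lra ClassicalEpsilon.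
From mathcomp Require Import all_boot all_algebra.
From mathcomp Require algebra_tactics.ring algebra_tactics.lra.
From mathcomp Require Import zify.

(* Faces of T_n are addressed by base-6 numbers, so a cell (a face of some T_m
   with all its descendants) is an interval of addresses.  For J and a cell C of
   depth m, let b(C) count the boundary edges of J inside C and w_s(C) the
   number of faces of J along side s of C, which consists of 2^m faces.  Going
   round the six children of C and across the spokes between them shows
   w_s(C) <= w_s'(C) + b(C); moreover b(C) = 0 forces J to be constant on C.
   Let l = floor(log_16 |J|).  If some cell of depth l lies inside J, these
   estimates carry its 2^l side faces up to a cell whose side avoids J, so
   |bd J| >= 2^l >= (|J|/16)^(1/4).  Otherwise each of the at least |J|/6^l
   cells of depth l meeting J contains a boundary edge, and
   |J|/6^l >= |J|^(1/4) because 6^4 <= 16^3.  Geometry is needed only to see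
   that faces facing each other across a spoke are adjacent, and that the
   neighbours of a face of H_k lie in H_(k+1), which makes bd J finite. *)

(** * Affine geometry of faces *)

Section PlaneGeometry.
Import mathcomp.algebra_tactics.ring mathcomp.algebra_tactics.lra GRing.Theory.
Local Open Scope ring_scope.

Definition lerp (a b : pt) (r : rat) : pt :=
  (a.1.1 + r * (b.1.1 - a.1.1), a.1.2 + r * (b.1.2 - a.1.2), a.2 + r * (b.2 - a.2)).

Lemma lerp_lerp a b r s u :
  lerp (lerp a b r) (lerp a b s) u = lerp a b (r + u * (s - r)).
Proof.
case: a => [[a1 a2] a3]; case: b => [[b1 b2] b3]; rewrite /lerp /=.
congr (_, _, _); ring.
Qed.

Lemma midp_lerp a b : midp a b = lerp a b (1 / 2).
Proof.
case: a => [[a1 a2] a3]; case: b => [[b1 b2] b3]; rewrite /lerp /midp /=.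
by congr (_, _, _); field.
Qed.

Lemma lerp0 a b : lerp a b 0 = a.
Proof. by case: a => [[a1 a2] a3]; rewrite /lerp /= !mul0r !addr0. Qed.

Lemma lerp1 a b : lerp a b 1 = b.
Proof.
case: a => [[a1 a2] a3]; case: b => [[b1 b2] b3]; rewrite /lerp /=.
by rewrite !mul1r !subrKC.
Qed.

Lemma lerpC a b r : lerp a b r = lerp b a (1 - r).
Proof.
case: a => [[a1 a2] a3]; case: b => [[b1 b2] b3]; rewrite /lerp /=.
congr (_, _, _); ring.
Qed.

Definition corner (s : nat) (f : face) : pt :=
  match s with 0 => f.1.1 | 1 => f.1.2 | _ => f.2 end.

Definition has_side (f : face) (p q : pt) : Prop :=
  [\/ f.1.1 = p /\ f.1.2 = q, f.1.2 = p /\ f.2 = q | f.2 = p /\ f.1.1 = q].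

Lemma child_side s h f : (s < 3)%N -> (h < 2)%N ->
  (child (2 * s + h) f).1.1 = lerp (corner s f) (corner (s.+1 %% 3) f) (h%:R / 2) /\
  (child (2 * s + h) f).1.2 = lerp (corner s f) (corner (s.+1 %% 3) f) (h.+1%:R / 2).
Proof.
case: f => [[x y] z].
case: s => [|[|[|s]]] // _; case: h => [|[|h]] // _ /=;
by rewrite ?mul0r ?lerp0 ?divff ?lerp1 -?midp_lerp.
Qed.

Lemma has_side_verts {f p q} : has_side f p q -> p \in verts f /\ q \in verts f.
Proof. by rewrite /verts !inE; case=> -[-> ->]; rewrite !eqxx ?orbT. Qed.

Lemma has_side_share {f g p q} :
  has_side f p q -> p \in verts g -> q \in verts g -> share_side f g.
Proof.
rewrite /share_side /verts /=.
case=> -[-> ->] -> ->; rewrite /= ?addn0 ?add0n ?addnA.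
all: by case: (_ \in _) => //; case: (_ \in _).
Qed.

(* Barycentric coordinates q in the frame F; linear in q, the coordinates
   are not normalised. *)
Definition bary (F : face) (q : pt) : pt :=
  (q.1.1 * F.1.1.1.1 + q.1.2 * F.1.2.1.1 + q.2 * F.2.1.1,
   q.1.1 * F.1.1.1.2 + q.1.2 * F.1.2.1.2 + q.2 * F.2.1.2,
   q.1.1 * F.1.1.2 + q.1.2 * F.1.2.2 + q.2 * F.2.2).

Definition map_face (g : pt -> pt) (f : face) : face := (g f.1.1, g f.1.2, g f.2).

Definition T0 : face := (v0, v1, v2).

Lemma bary_midp F p q : bary F (midp p q) = midp (bary F p) (bary F q).
Proof.
case: F => [[[[x1 x2] x3] [[y1 y2] y3]] [[z1 z2] z3]].
case: p => [[p1 p2] p3]; case: q => [[q1 q2] q3].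
rewrite /bary /midp /=; congr (_, _, _); ring.
Qed.

Lemma bary_baryc F p q r :
  bary F (baryc p q r) = baryc (bary F p) (bary F q) (bary F r).
Proof.
case: F => [[[[x1 x2] x3] [[y1 y2] y3]] [[z1 z2] z3]].
case: p => [[p1 p2] p3]; case: q => [[q1 q2] q3]; case: r => [[r1 r2] r3].
rewrite /bary /baryc /=; congr (_, _, _); ring.
Qed.

Lemma bary_comp F G q : bary (map_face (bary F) G) q = bary F (bary G q).
Proof.
case: F => [[[[x1 x2] x3] [[y1 y2] y3]] [[z1 z2] z3]].
case: G => [[[[a1 a2] a3] [[b1 b2] b3]] [[c1 c2] c3]].
case: q => [[q1 q2] q3]; rewrite /bary /map_face /=; congr (_, _, _); ring.
Qed.

Lemma map_face_T0 F : map_face (bary F) T0 = F.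
Proof.
case: F => [[[[x1 x2] x3] [[y1 y2] y3]] [[z1 z2] z3]].
by rewrite /map_face /bary /=; congr (_, _, _); congr (_, _, _); ring.
Qed.

Lemma child_map_face F i g :
  child i (map_face (bary F) g) = map_face (bary F) (child i g).
Proof.
case: g => [[x y] z].
by case: i => [|[|[|[|[|i]]]]]; rewrite /map_face /= ?bary_midp ?bary_baryc.
Qed.

Lemma child_frame F i : child i F = map_face (bary F) (child i T0).
Proof. by rewrite -child_map_face map_face_T0. Qed.

Definition nondeg (F : face) : Prop := injective (bary F).

Lemma nondeg_child i F : nondeg F -> nondeg (child i F).
Proof.
rewrite child_frame => hF p q; rewrite !bary_comp => /hF.
case: p q => [[a1 a2] a3] [[b1 b2] b3].
by case: i => [|[|[|[|[|i]]]]] [e1 e2 e3]; congr (_, _, _); lra.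
Qed.

Lemma nondeg_face_of n v : nondeg (face_of n v).
Proof.
elim: n v => [|n IH] v /=; last exact: nondeg_child.
by move=> [[a1 a2] a3] [[b1 b2] b3] [e1 e2 e3]; congr (_, _, _); lra.
Qed.

Lemma nondeg_corners {F} :
  nondeg F -> [/\ F.1.1 <> F.1.2, F.1.2 <> F.2 & F.2 <> F.1.1].
Proof.
move=> hF; rewrite -(map_face_T0 F) /map_face /=.
(* x + 2y separates v0, v1 and v2. *)
by split=> /hF /(congr1 (fun p : pt => p.1.1 + 2%:R * p.1.2)) /eqP.
Qed.

End PlaneGeometry.

(** * Addresses, cells and their sides *)

Fixpoint descend (k w : nat) (f : face) : face :=
  match k with 0 => f | k'.+1 => child (w %% 6) (descend k' (w %/ 6) f) end.

Lemma face_of_split N k P w : w < 6 ^ k ->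
  face_of (N + k) (P * 6 ^ k + w) = descend k w (face_of N P).
Proof.
elim: k w => [|k IH] w hw /=.
  have -> : w = 0 by move: hw; rewrite expn0; case: w.
  by rewrite addn0 expn0 muln1 addn0.
rewrite addnS /=; congr child.
  by rewrite expnS mulnCA -modnDml modnMr add0n.
rewrite expnS mulnCA [6 * _]mulnC divnMDl // IH //.
by rewrite ltn_divLR // mulnC -expnS.
Qed.

Lemma descend_cons k c w f : c < 6 -> w < 6 ^ k ->
  descend k.+1 (c * 6 ^ k + w) f = descend k w (child c f).
Proof.
elim: k w => [|k IH] w hc hw.
  have -> : w = 0 by move: hw; rewrite expn0; case: w.
  by rewrite /= muln1 addn0 modn_small // divn_small.
have hw' : w %/ 6 < 6 ^ k by rewrite ltn_divLR // mulnC -expnS.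
rewrite [LHS]/= expnS mulnCA -modnDml modnMr add0n [6 * _]mulnC divnMDl //.
by rewrite [descend k.+1 _ _]/= -IH.
Qed.

(* [side_addr m s t] is the address, relative to a cell of depth m, of the
   face whose first side is the t-th of the 2^m pieces of side s of the cell:
   the leading digit 2s + h picks the child halving side s on the correct
   half, and the remaining digits follow the first side of that child. *)
Fixpoint side_addr (m s t : nat) : nat :=
  match m with
  | 0 => 0
  | m'.+1 => (2 * s + t %/ 2 ^ m') * 6 ^ m' + side_addr m' 0 (t %% 2 ^ m')
  end.

Lemma side_addr_lt m s t : s < 3 -> t < 2 ^ m -> side_addr m s t < 6 ^ m.
Proof.
elim: m s t => [|m IH] s t hs ht /=; first by rewrite expn0.
have ht1 : t %/ 2 ^ m < 2 by rewrite ltn_divLR ?expn_gt0 // -expnS.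
have := IH 0 (t %% 2 ^ m) erefl (ltn_pmod _ (expn_gt0 2 m)).
rewrite expnS; nia.
Qed.

Lemma side_addr_inj m s t t' : s < 3 -> t < 2 ^ m -> t' < 2 ^ m ->
  side_addr m s t = side_addr m s t' -> t = t'.
Proof.
elim: m s t t' => [|m IH] s t t' hs ht ht' /=.
  by move: ht ht'; rewrite expn0; case: t => //; case: t'.
have r1 := side_addr_lt m 0 (t %% 2 ^ m) erefl (ltn_pmod _ (expn_gt0 2 m)).
have r2 := side_addr_lt m 0 (t' %% 2 ^ m) erefl (ltn_pmod _ (expn_gt0 2 m)).
move=> e.
have e1 := congr1 (fun x => x %/ 6 ^ m) e.
have e2 := congr1 (fun x => x %% 6 ^ m) e.
rewrite /= !divnMDl ?expn_gt0 // (divn_small r1) (divn_small r2) !addn0 in e1.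
rewrite /= !modnMDl (modn_small r1) (modn_small r2) in e2.
have e3 : t %% 2 ^ m = t' %% 2 ^ m by apply: (IH 0) => //; rewrite ltn_pmod ?expn_gt0.
rewrite (divn_eq t (2 ^ m)) (divn_eq t' (2 ^ m)) e3; congr (_ * _ + _); lia.
Qed.

Lemma side_addr_ge m s t : 2 * s * 6 ^ m <= side_addr m.+1 s t.
Proof. by apply: leq_trans (leq_addr _ _); rewrite leq_mul2r leq_addr orbT. Qed.

Section SideGeometry.
Import mathcomp.algebra_tactics.ring GRing.Theory Num.Theory.

Lemma descend_side_addr m s t f : s < 3 -> t < 2 ^ m ->
  has_side (descend m (side_addr m s t) f)
    (lerp (corner s f) (corner (s.+1 %% 3) f) (t%:R / (2 ^ m)%:R)%R)
    (lerp (corner s f) (corner (s.+1 %% 3) f) (t.+1%:R / (2 ^ m)%:R)%R).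
Proof.
elim: m s t f => [|m IH] s t f hs ht.
  have -> : t = 0 by move: ht; rewrite expn0; case: t.
  rewrite /= expn0 !divr1 lerp0 lerp1.
  by case: s hs => [|[|[|s]]] // _; [apply: Or31 | apply: Or32 | apply: Or33].
set h := t %/ 2 ^ m; set t' := t %% 2 ^ m.
have hh : h < 2 by rewrite ltn_divLR ?expn_gt0 // -expnS.
have ht' : t' < 2 ^ m by rewrite ltn_pmod ?expn_gt0.
have ht2 : t = h * 2 ^ m + t' by rewrite /h /t' -divn_eq.
rewrite [side_addr _ _ _]/= -/h -/t' descend_cons; last exact: side_addr_lt.
  2: lia.
have [e1 e2] := child_side s h f hs hh.
have := IH 0 t' (child (2 * s + h) f) erefl ht'.
rewrite /= e1 e2 !lerp_lerp.
have nz : ((2 ^ m)%:R != 0 :> rat)%R by rewrite pnatr_eq0 expn_eq0.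
have scale u : (h%:R / 2 + u%:R / (2 ^ m)%:R * (h.+1%:R / 2 - h%:R / 2) =
               (h * 2 ^ m + u)%:R / (2 ^ m.+1)%:R :> rat)%R.
  rewrite expnS natrM natrD natrM -addn1 natrD; field; by rewrite nz.
by rewrite !scale -ht2 addnS -ht2.
Qed.

End SideGeometry.

Definition side_face (q m s t : nat) : nat := q * 6 ^ m + side_addr m s t.

Lemma side_face_div q m s t : s < 3 -> t < 2 ^ m -> side_face q m s t %/ 6 ^ m = q.
Proof.
by move=> hs ht; rewrite divnMDl ?expn_gt0 // divn_small ?addn0 // side_addr_lt.
Qed.

Lemma side_face_lt q m s t : s < 3 -> t < 2 ^ m -> side_face q m s t < q.+1 * 6 ^ m.
Proof. by move=> hs ht; rewrite /side_face mulSn addnC ltn_add2r side_addr_lt. Qed.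

(* The cell q is a face of T_q, as q < 6 ^ q. *)
Lemma face_of_side_face q i m s t : i < 6 -> s < 3 -> t < 2 ^ m ->
  face_of (q.+1 + m) (side_face (6 * q + i) m s t) =
  descend m (side_addr m s t) (child i (face_of q q)).
Proof.
move=> hi hs ht; rewrite face_of_split /=; last exact: side_addr_lt.
by rewrite [6 * q]mulnC modnMDl modn_small // divnMDl // divn_small // addn0.
Qed.

(* The spoke between children i and i+1 (mod 6) of the cell q of depth m+1
   is cut into 2^m segments; its t-th segment is a side of [spoke_left] in
   child i and of [spoke_right] in child i+1, which sees it reversed. *)
Definition spoke_left q m i t := side_face (6 * q + i) m 1 t.
Definition spoke_right q m i t := side_face (6 * q + i.+1 %% 6) m 2 (2 ^ m - t.+1).

Lemma child_succ_corners i F : i < 6 ->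
  (child (i.+1 %% 6) F).1.1 = (child i F).1.2 /\ (child (i.+1 %% 6) F).2 = (child i F).2.
Proof. by case: F => [[x y] z]; case: i => [|[|[|[|[|[|i]]]]]]. Qed.

Section Spokes.
Import mathcomp.algebra_tactics.ring GRing.Theory Num.Theory.

Lemma hex_adj_spoke q m i t : i < 6 -> t < 2 ^ m ->
  hex_adj (spoke_left q m i t) (spoke_right q m i t) /\
  hex_adj (spoke_right q m i t) (spoke_left q m i t).
Proof.
move=> hi ht.
have ht' : 2 ^ m - t.+1 < 2 ^ m by lia.
have hi' : i.+1 %% 6 < 6 by rewrite ltn_pmod.
set F := face_of q q.
have [l1 l2] := child_succ_corners i F hi.
have hL := descend_side_addr m 1 t (child i F) erefl ht.
have hR := descend_side_addr m 2 (2 ^ m - t.+1) (child (i.+1 %% 6) F) erefl ht'.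
rewrite /= in hL; rewrite /= l1 l2 lerpC [X in has_side _ _ X]lerpC in hR.
have nz : ((2 ^ m)%:R != 0 :> rat)%R by rewrite pnatr_eq0 expn_eq0.
have rev u : u <= 2 ^ m ->
    (1 - (2 ^ m - u)%:R / (2 ^ m)%:R = u%:R / (2 ^ m)%:R :> rat)%R.
  by move=> hu; rewrite natrB //; field; rewrite nz.
have succ_rev : (2 ^ m - t.+1).+1 = 2 ^ m - t by lia.
rewrite (rev t.+1 ht) succ_rev (rev t (ltnW ht)) in hR.
rewrite -face_of_side_face // -/(spoke_left q m i t) in hL.
rewrite -face_of_side_face // -/(spoke_right q m i t) in hR.
have [hL1 hL2] := has_side_verts hL.
have [hR1 hR2] := has_side_verts hR.
have neq : spoke_left q m i t <> spoke_right q m i t.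
  move/(congr1 (fun x => x %/ 6 ^ m)); rewrite !side_face_div //; lia.
have lt_level P s u : P < 6 * q.+1 -> s < 3 -> u < 2 ^ m ->
    side_face P m s u < 6 ^ (q.+1 + m).
  move=> hP hs hu; apply: (leq_trans (side_face_lt P m s u hs hu)).
  rewrite expnD leq_mul2r expnS; apply/orP; right.
  by apply: leq_trans hP _; rewrite leq_mul2l /= ltn_expl.
have hLn : spoke_left q m i t < 6 ^ (q.+1 + m) by apply: lt_level => //; lia.
have hRn : spoke_right q m i t < 6 ^ (q.+1 + m) by apply: lt_level => //; lia.
split; split; try by [apply: neq | move/esym].
- by exists (q.+1 + m); split; last exact: has_side_share hL hR2 hR1.
- by exists (q.+1 + m); split; last exact: has_side_share hR hL2 hL1.
Qed.

End Spokes.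

(** * Neighbours of a face of H_k lie in H_(k+1) *)

Section Separation.
Import mathcomp.algebra_tactics.lra.
Local Open Scope ring_scope.

Definition all_corners (P : pt -> Prop) (f : face) : Prop :=
  [/\ P f.1.1, P f.1.2 & P f.2].

Definition subdiv_closed (P : pt -> Prop) : Prop :=
  (forall p q, P p -> P q -> P (midp p q)) /\
  (forall p q r, P p -> P q -> P r -> P (baryc p q r)).

Lemma all_corners_descend {P k w f} :
  subdiv_closed P -> all_corners P f -> all_corners P (descend k w f).
Proof.
move=> [hm hb]; elim: k w f => [|k IH] w f //= /(IH (w %/ 6)%N).
case: (descend k _ f) => [[x y] z] [hx hy hz].
by case: (w %% 6)%N => [|[|[|[|[|i]]]]]; split=> /=; auto.
Qed.

Definition frame_image (F : face) (Q : pt -> Prop) (p : pt) : Prop :=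
  exists q, p = bary F q /\ Q q.

Lemma subdiv_closed_frame_image F Q :
  subdiv_closed Q -> subdiv_closed (frame_image F Q).
Proof.
move=> [hm hb]; split.
  move=> _ _ [p [-> hp]] [q [-> hq]].
  by exists (midp p q); rewrite bary_midp; split; last exact: hm.
move=> _ _ _ [p [-> hp]] [q [-> hq]] [r [-> hr]].
by exists (baryc p q r); rewrite bary_baryc; split; last exact: hb.
Qed.

Lemma all_corners_frame F Q g :
  all_corners Q g -> all_corners (frame_image F Q) (map_face (bary F) g).
Proof. by case: g => [[x y] z] [hx hy hz]; split; [exists x | exists y | exists z]. Qed.

(* The triangle [child 0 (child 0 T0)], with corners v0, (3/4, 1/4, 0) and
   (11/18, 5/18, 1/9). *)
Definition corner_region (q : pt) : Prop :=
  q.1.1 + q.1.2 + q.2 = 1 /\ 0 <= q.2 /\ 0 <= 2%:R * q.1.2 - 5%:R * q.2 /\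
  0 <= q.1.1 - 3%:R * q.1.2 + 2%:R * q.2.

(* The triangle [child d T0], for 0 < d < 6. *)
Definition sector (d : nat) (q : pt) : Prop :=
  q.1.1 + q.1.2 + q.2 = 1 /\
  match d with
  | 1 => q.1.1 <= q.1.2 /\ q.2 <= q.1.1
  | 2 => q.2 <= q.1.2 /\ q.1.1 <= q.2
  | 3 => q.1.2 <= q.2 /\ q.1.1 <= q.1.2
  | 4 => q.1.1 <= q.2 /\ q.1.2 <= q.1.1
  | _ => q.2 <= q.1.1 /\ q.1.2 <= q.2
  end.

Lemma subdiv_closed_corner_region : subdiv_closed corner_region.
Proof.
split.
  move=> [[p1 p2] p3] [[q1 q2] q3]; rewrite /corner_region /midp /=.
  by move=> [? [? [? ?]]] [? [? [? ?]]]; repeat split; lra.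
move=> [[p1 p2] p3] [[q1 q2] q3] [[r1 r2] r3]; rewrite /corner_region /baryc /=.
by move=> [? [? [? ?]]] [? [? [? ?]]] [? [? [? ?]]]; repeat split; lra.
Qed.

Lemma subdiv_closed_sector d : subdiv_closed (sector d).
Proof.
split.
  move=> [[p1 p2] p3] [[q1 q2] q3]; rewrite /sector /midp /=.
  by case: d => [|[|[|[|[|d]]]]] [? [? ?]] [? [? ?]]; repeat split; lra.
move=> [[p1 p2] p3] [[q1 q2] q3] [[r1 r2] r3]; rewrite /sector /baryc /=.
by case: d => [|[|[|[|[|d]]]]] [? [? ?]] [? [? ?]] [? [? ?]]; repeat split; lra.
Qed.

Lemma all_corners_corner_region (R : face) :
  all_corners (frame_image R corner_region) (child 0 (child 0 R)).
Proof.
rewrite -[R in child 0 (child 0 R)]map_face_T0 !child_map_face.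
apply: all_corners_frame.
by rewrite /all_corners /corner_region /= /midp /baryc /=; repeat split; lra.
Qed.

Lemma all_corners_sector (R : face) d : (0 < d < 6)%N ->
  all_corners (frame_image R (sector d)) (child d R).
Proof.
move=> hd; rewrite -[R in child d R]map_face_T0 child_map_face.
apply: all_corners_frame; rewrite /all_corners /sector /midp /baryc /=.
by case: d hd => [|[|[|[|[|[|d]]]]]] // _ /=; repeat split; lra.
Qed.

Lemma corner_region_sector d q : (0 < d < 6)%N ->
  corner_region q -> sector d q -> q = v0.
Proof.
case: q => [[a b] c]; rewrite /corner_region /sector /v0 /=.
case: d => [|[|[|[|[|[|d]]]]]] // _ [h1 [h2 [h3 h4]]] [h5 [h6 h7]];
  try (exfalso; lra).
congr (_, _, _); lra.
Qed.

Lemma nondeg_descend k w f : nondeg f -> nondeg (descend k w f).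
Proof. by elim: k w => [|k IH] w //= hf; apply/nondeg_child/IH. Qed.

(* A face inside [child 0 (child 0 R)] meets a face inside another child of R
   at most in the corner R.1.1, so the two faces share no side. *)
Lemma no_share_side (R : face) k k' u w d : nondeg R -> (0 < d < 6)%N ->
  ~ share_side (descend k' u (child 0 (child 0 R))) (descend k w (child d R)).
Proof.
move=> hR hd.
set Fu := descend k' u _; set Fv := descend k w _.
have [hu1 hu2 hu3] : all_corners (frame_image R corner_region) Fu.
  apply: (all_corners_descend _ (all_corners_corner_region R)).
  exact/subdiv_closed_frame_image/subdiv_closed_corner_region.
have [hv1 hv2 hv3] : all_corners (frame_image R (sector d)) Fv.
  apply: (all_corners_descend _ (all_corners_sector R d hd)).
  exact/subdiv_closed_frame_image/subdiv_closed_sector.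
have common p : frame_image R corner_region p -> p \in verts Fv -> p = R.1.1.
  move=> [q1 [-> h1]] hp.
  suff in_sector : forall r, frame_image R (sector d) r -> bary R q1 = r -> q1 = v0.
    rewrite -[in RHS](map_face_T0 R) /=; congr bary.
    by move: hp; rewrite !inE => /or3P[] /eqP; apply: in_sector.
  move=> _ [q2 [-> h2]] /hR e.
  by apply: (corner_region_sector d q1 hd h1); rewrite e.
have nondeg_Fu : nondeg Fu.
  by apply: nondeg_descend; do 2 apply: nondeg_child.
have [d1 d2 d3] := nondeg_corners nondeg_Fu.
rewrite /share_side /verts /=.
case e1: (Fu.1.1 \in verts Fv); case e2: (Fu.1.2 \in verts Fv);
  case e3: (Fu.2 \in verts Fv) => //= _.
- by apply: d1; rewrite (common _ hu1 e1) (common _ hu2 e2).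
- by apply: d1; rewrite (common _ hu1 e1) (common _ hu2 e2).
- by apply: d3; rewrite (common _ hu1 e1) (common _ hu3 e3).
- by apply: d2; rewrite (common _ hu2 e2) (common _ hu3 e3).
Qed.

End Separation.

Lemma face_of_lead_digit N K c w : c < 6 -> w < 6 ^ K ->
  face_of (N + K.+1) (c * 6 ^ K + w) = descend K w (child c (face_of N 0)).
Proof.
move=> hc hw; rewrite -descend_cons //.
have := face_of_split N K.+1 0 (c * 6 ^ K + w); rewrite mul0n add0n => -> //.
by rewrite expnS; nia.
Qed.

(* A face with a nonzero digit d in position K > k lies in [child d R] for the
   face R = face_of (n - K - 1) 0, whereas a face of H_k lies in
   [child 0 (child 0 R)]. *)
Lemma hex_adj_lt k u v : u < 6 ^ k -> hex_adj u v -> v < 6 ^ k.+1.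
Proof.
move=> hu [_ [n [_ hvn hs]]]; rewrite ltnNge; apply/negP => hv.
have v_gt0 : 0 < v by apply: leq_trans hv; rewrite expn_gt0.
have hK1 := trunc_logP (erefl : 1 < 6) v_gt0.
have hK2 := trunc_log_ltn v (erefl : 1 < 6).
have kK : k < trunc_log 6 v.
  by rewrite -ltnS -(ltn_exp2l _ _ (erefl : 1 < 6)); apply: leq_ltn_trans hv hK2.
have Kn : trunc_log 6 v < n.
  by rewrite -(ltn_exp2l _ _ (erefl : 1 < 6)); apply: leq_ltn_trans hK1 hvn.
move: kK hK1 hK2 Kn; case: (trunc_log 6 v) => // K hkK hK1 hK2 Kn.
set R := face_of (n - K.+2) 0.
have en : n = (n - K.+2) + K.+2 by rewrite subnK.
have [d_gt0 d_lt6] : 0 < v %/ 6 ^ K.+1 /\ v %/ 6 ^ K.+1 < 6.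
  by rewrite divn_gt0 ?expn_gt0 // ltn_divLR ?expn_gt0 // -expnSr.
have w_lt := ltn_pmod v (expn_gt0 6 K.+1).
have := face_of_lead_digit (n - K.+2) K.+1 _ _ d_lt6 w_lt.
rewrite -divn_eq -en => fv.
have hu' : u < 6 ^ K by apply: leq_trans hu _; rewrite leq_exp2l.
have hu1 : u < 6 ^ K.+1 by apply: ltn_trans hu' _; rewrite ltn_exp2l.
have := face_of_lead_digit (n - K.+2) K.+1 0 u erefl hu1.
rewrite mul0n add0n -en -/R -[u in descend _ u]add0n -(mul0n (6 ^ K)) descend_cons // => fu.
rewrite fu fv in hs; apply: no_share_side hs => //; first exact: nondeg_face_of.
by rewrite d_gt0.
Qed.

(** * Counting boundary edges in cells *)

(* The six children of a cell form a cycle: sides 0 of children 2s and 2s+1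
   make up side s of the cell, and side 1 of child i faces side 2 of child
   i+1 (mod 6) across a spoke.  [side i s] counts the faces of J along side s
   of child i, [bd i] the boundary edges inside child i and [cr i] the spoke
   faces after child i whose partner across the spoke is on the other side of
   J. *)
Section Hexagon.
Variables (side : nat -> nat -> nat) (bd cr : nat -> nat).
Hypothesis side_near :
  forall i s1 s2, i < 6 -> s1 < 3 -> s2 < 3 -> side i s1 <= side i s2 + bd i.
Hypothesis spoke_near : forall i j, i < 6 -> j = i.+1 %% 6 ->
  side i 1 <= side j 2 + cr i /\ side j 2 <= side i 1 + cr i.

Let outer s := side (2 * s) 0 + side (2 * s).+1 0.
Let total := \sum_(i < 6) (bd i + cr i).

Let near i : i < 6 -> side i 0 <= side i 1 + bd i /\ side i 1 <= side i 0 + bd i /\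
  side i 0 <= side i 2 + bd i /\ side i 2 <= side i 0 + bd i /\
  side i 1 <= side i 2 + bd i /\ side i 2 <= side i 1 + bd i.
Proof. by move=> hi; do ![split | apply: side_near]. Qed.

Lemma hexagon_outer s1 s2 : s1 < 3 -> s2 < 3 -> outer s1 <= outer s2 + total.
Proof.
have [? [? [? [? [? ?]]]]] := near 0 isT; have [? [? [? [? [? ?]]]]] := near 1 isT.
have [? [? [? [? [? ?]]]]] := near 2 isT; have [? [? [? [? [? ?]]]]] := near 3 isT.
have [? [? [? [? [? ?]]]]] := near 4 isT; have [? [? [? [? [? ?]]]]] := near 5 isT.
have [? ?] := spoke_near 0 1 isT erefl; have [? ?] := spoke_near 1 2 isT erefl.
have [? ?] := spoke_near 2 3 isT erefl; have [? ?] := spoke_near 3 4 isT erefl.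
have [? ?] := spoke_near 4 5 isT erefl; have [? ?] := spoke_near 5 0 isT erefl.
rewrite /outer /total !big_ord_recr big_ord0 /=.
by case: s1 => [|[|[|//]]] _; case: s2 => [|[|[|//]]] _;
  rewrite -?[2 * 0]/0 -?[2 * 1]/2 -?[2 * 2]/4; lia.
Qed.

(* Child i has its side 0 on side i/2 of the cell; otherwise its side 1 is
   routed along the spokes to side s. *)
Lemma hexagon_inner i s : i < 6 -> s < 3 ->
  side i (if i./2 == s then 0 else 1) + bd i <= outer s + total.
Proof.
have [? [? [? [? [? ?]]]]] := near 0 isT; have [? [? [? [? [? ?]]]]] := near 1 isT.
have [? [? [? [? [? ?]]]]] := near 2 isT; have [? [? [? [? [? ?]]]]] := near 3 isT.
have [? [? [? [? [? ?]]]]] := near 4 isT; have [? [? [? [? [? ?]]]]] := near 5 isT.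
have [? ?] := spoke_near 0 1 isT erefl; have [? ?] := spoke_near 1 2 isT erefl.
have [? ?] := spoke_near 2 3 isT erefl; have [? ?] := spoke_near 3 4 isT erefl.
have [? ?] := spoke_near 4 5 isT erefl; have [? ?] := spoke_near 5 0 isT erefl.
rewrite /outer /total !big_ord_recr big_ord0 /=.
by case: i => [|[|[|[|[|[|//]]]]]] _; case: s => [|[|[|//]]] _ /=;
  rewrite -?[2 * 0]/0 -?[2 * 1]/2 -?[2 * 2]/4; lia.
Qed.

End Hexagon.

Definition hex_adjb (a b : nat) : bool :=
  if excluded_middle_informative (hex_adj a b) then true else false.

Lemma hex_adjP a b : reflect (hex_adj a b) (hex_adjb a b).
Proof. by rewrite /hex_adjb; case: excluded_middle_informative => h; constructor. Qed.

Lemma count_le_uniq (T : eqType) (p : pred T) s1 s2 : uniq s1 ->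
  {in s1, forall x, p x -> x \in s2} -> count p s1 <= count p s2.
Proof.
move=> u h; rewrite -!size_filter; apply: uniq_leq_size; first exact: filter_uniq.
by move=> x; rewrite !mem_filter => /andP[px xs]; rewrite px h.
Qed.

Definition cell (q m : nat) : seq nat := iota (q * 6 ^ m) (6 ^ m).

Lemma mem_cell x q m : (x \in cell q m) = (x %/ 6 ^ m == q).
Proof.
have hN : 0 < 6 ^ m by rewrite expn_gt0.
rewrite mem_iota; apply/andP/eqP => [[h1 h2]|<-].
  have -> : x = q * 6 ^ m + (x - q * 6 ^ m) by rewrite subnKC.
  rewrite divnMDl // divn_small ?addn0 //; lia.
by rewrite leq_divM addnC -mulSn ltn_ceil.
Qed.

Lemma side_face_cell q m s t : s < 3 -> t < 2 ^ m -> side_face q m s t \in cell q m.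
Proof. by move=> hs ht; rewrite mem_cell side_face_div. Qed.

Lemma cell_children q m : cell q m.+1 =
  cell (6 * q) m ++ cell (6 * q + 1) m ++ cell (6 * q + 2) m ++
  cell (6 * q + 3) m ++ cell (6 * q + 4) m ++ cell (6 * q + 5) m.
Proof.
rewrite /cell.
have -> : 6 ^ m.+1 = 6 ^ m + (6 ^ m + (6 ^ m + (6 ^ m + (6 ^ m + 6 ^ m)))).
  by rewrite expnS; lia.
rewrite !iotaD; congr (iota _ _ ++ iota _ _ ++ iota _ _ ++ iota _ _ ++ iota _ _ ++ iota _ _);
  nia.
Qed.

Section CellCounts.
Variable J : pred nat.

Definition boundary_pair (e : nat * nat) : bool := J e.1 && ~~ J e.2 && hex_adjb e.1 e.2.

Definition bd_between (s t : seq nat) : nat :=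
  count boundary_pair [seq (a, b) | a <- s, b <- t].

Definition cell_bd (q m : nat) : nat := bd_between (cell q m) (cell q m).

Definition side_mass (q m s : nat) : nat :=
  \sum_(0 <= t < 2 ^ m) J (side_face q m s t).

Definition spoke_cross (q m i : nat) : nat :=
  \sum_(0 <= t < 2 ^ m) (J (spoke_left q m i t) != J (spoke_right q m i t)).

Lemma bd_between_catl s1 s2 t : bd_between (s1 ++ s2) t = bd_between s1 t + bd_between s2 t.
Proof. by rewrite /bd_between allpairs_cat count_cat. Qed.

Lemma bd_between_catr s t1 t2 : bd_between s (t1 ++ t2) = bd_between s t1 + bd_between s t2.
Proof.
rewrite /bd_between; elim: s => [|x s IH] //=.
rewrite !count_cat map_cat count_cat IH; lia.
Qed.

Lemma side_mass_children q m s : s < 3 ->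
  side_mass q m.+1 s = side_mass (6 * q + 2 * s) m 0 + side_mass (6 * q + (2 * s).+1) m 0.
Proof.
move=> hs; rewrite /side_mass.
have h2 : 0 < 2 ^ m by rewrite expn_gt0.
rewrite (@big_cat_nat _ _ _ (2 ^ m)) //=; last by rewrite expnS; lia.
congr (_ + _).
  apply: eq_big_nat => t /andP[_ ht]; congr (nat_of_bool (J _)).
  rewrite /side_face /= divn_small // modn_small // addn0 expnS; nia.
rewrite -{1}[2 ^ m]add0n big_addn.
have -> : 2 ^ m.+1 - 2 ^ m = 2 ^ m by rewrite expnS; lia.
apply: eq_big_nat => t /andP[_ ht]; congr (nat_of_bool (J _)).
have e1 : (t + 2 ^ m) %/ 2 ^ m = 1 by rewrite divnDr ?dvdnn // divnn h2 divn_small.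
have e2 : (t + 2 ^ m) %% 2 ^ m = t by rewrite modnDr modn_small.
rewrite /side_face /= e1 e2 expnS; nia.
Qed.

Lemma side_mass_spoke q m i j : j = i.+1 %% 6 ->
  side_mass (6 * q + i) m 1 <= side_mass (6 * q + j) m 2 + spoke_cross q m i /\
  side_mass (6 * q + j) m 2 <= side_mass (6 * q + i) m 1 + spoke_cross q m i.
Proof.
move=> ->; rewrite [side_mass _ m 2]/side_mass big_nat_rev /= add0n.
rewrite /side_mass /spoke_cross -!big_split /=.
split; apply: leq_sum => t _; rewrite /spoke_left /spoke_right;
  by case: (J (side_face (6 * q + i) m 1 t)); case: (J (side_face _ m 2 _)).
Qed.

Lemma spoke_cross_le q m i j : i < 6 -> j = i.+1 %% 6 ->
  spoke_cross q m i <=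
  bd_between (cell (6 * q + i) m) (cell (6 * q + j) m) +
  bd_between (cell (6 * q + j) m) (cell (6 * q + i) m).
Proof.
move=> hi ej.
pose ts := iota 0 (2 ^ m).
pose lr t := (spoke_left q m i t, spoke_right q m i t).
pose rl t := (spoke_right q m i t, spoke_left q m i t).
have spoke_in_cells t : t \in ts ->
    spoke_left q m i t \in cell (6 * q + i) m /\ spoke_right q m i t \in cell (6 * q + j) m.
  rewrite mem_iota => /andP[_ ht]; rewrite ej.
  by split; apply: side_face_cell => //; lia.
have left_inj : {in ts &, injective (spoke_left q m i)}.
  move=> t t'; rewrite !mem_iota => /andP[_ ht] /andP[_ ht'] /eqP.
  by rewrite eqn_add2l => /eqP; apply: side_addr_inj.
apply: (@leq_trans (count boundary_pair (map lr ts) + count boundary_pair (map rl ts))).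
  rewrite !count_map -!sumn_count !sumnE !big_map -big_split /spoke_cross /index_iota.
  rewrite subn0 big_seq [X in _ <= X]big_seq.
  apply: leq_sum => t; rewrite mem_iota => /andP[_ ht].
  have [/hex_adjP a1 /hex_adjP a2] := hex_adj_spoke q m i t hi ht.
  rewrite /boundary_pair /lr /rl /= a1 a2.
  by case: (J (spoke_left q m i t)); case: (J (spoke_right q m i t)).
apply: leq_add; apply: count_le_uniq.
- by rewrite map_inj_in_uniq ?iota_uniq // => t t' ht ht' [/left_inj ->].
- by move=> _ /mapP[t /spoke_in_cells[h1 h2] ->] _; apply: allpairs_f.
- by rewrite map_inj_in_uniq ?iota_uniq // => t t' ht ht' [_ /left_inj ->].
- by move=> _ /mapP[t /spoke_in_cells[h1 h2] ->] _; apply: allpairs_f.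
Qed.

Lemma cell_bd_children q m :
  \sum_(i < 6) (cell_bd (6 * q + i) m + spoke_cross q m i) <= cell_bd q m.+1.
Proof.
have c0 := spoke_cross_le q m 0 1 isT erefl.
have c1 := spoke_cross_le q m 1 2 isT erefl.
have c2 := spoke_cross_le q m 2 3 isT erefl.
have c3 := spoke_cross_le q m 3 4 isT erefl.
have c4 := spoke_cross_le q m 4 5 isT erefl.
have c5 := spoke_cross_le q m 5 0 isT erefl.
rewrite addn0 in c0 c5.
rewrite !big_ord_recr big_ord0 /= !addn0 /cell_bd cell_children.
rewrite !bd_between_catl !bd_between_catr; lia.
Qed.

Lemma side_mass_le m q s1 s2 : s1 < 3 -> s2 < 3 ->
  side_mass q m s1 <= side_mass q m s2 + cell_bd q m.
Proof.
elim: m q s1 s2 => [|m IH] q s1 s2 hs1 hs2.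
  by rewrite /side_mass expn0 !big_nat1 /side_face /= leq_addr.
rewrite !side_mass_children //.
apply: leq_trans (hexagon_outer (fun i s => side_mass (6 * q + i) m s)
  (fun i => cell_bd (6 * q + i) m) (spoke_cross q m)
  (fun i s s' _ => IH (6 * q + i) s s') (fun i j _ => side_mass_spoke q m i j)
  s1 s2 hs1 hs2) _.
by rewrite leq_add2l cell_bd_children.
Qed.

Lemma side_mass_child m q i s : i < 6 -> s < 3 ->
  side_mass (6 * q + i) m (if i./2 == s then 0 else 1) + cell_bd (6 * q + i) m <=
  side_mass q m.+1 s + cell_bd q m.+1.
Proof.
move=> hi hs; rewrite side_mass_children //.
apply: leq_trans (hexagon_inner (fun i s => side_mass (6 * q + i) m s)
  (fun i => cell_bd (6 * q + i) m) (spoke_cross q m)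
  (fun j s1 s2 _ => side_mass_le m (6 * q + j) s1 s2) (fun j k _ => side_mass_spoke q m j k)
  i s hi hs) _.
by rewrite leq_add2l cell_bd_children.
Qed.

Lemma full_cell_side_mass d l p s : {subset cell p l <= J} -> s < 3 ->
  2 ^ l <= side_mass (p %/ 6 ^ d) (l + d) s + cell_bd (p %/ 6 ^ d) (l + d).
Proof.
move=> hJ; elim: d s => [|d IH] s hs.
  rewrite expn0 divn1 addn0 /side_mass (eq_big_nat _ _ (F2 := fun _ => 1)).
    by rewrite sum_nat_const_nat muln1 subn0 leq_addr.
  by move=> t /andP[_ ht]; rewrite [J _](hJ _ (side_face_cell p l s t hs ht)).
set r := p %/ 6 ^ d.
have -> : p %/ 6 ^ d.+1 = r %/ 6 by rewrite expnS mulnC divnMA.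
have er : r = 6 * (r %/ 6) + r %% 6 by rewrite mulnC -divn_eq.
have hi : r %% 6 < 6 by rewrite ltn_pmod.
have := side_mass_child (l + d) (r %/ 6) (r %% 6) s hi hs; rewrite -er addnS.
by apply: leq_trans; apply: IH; case: ifP.
Qed.

Lemma cell_children_mem x q m : x \in cell q m.+1 ->
  exists2 i, i < 6 & x \in cell (6 * q + i) m.
Proof.
rewrite !mem_cell expnSr divnMA => /eqP xq.
exists (x %/ 6 ^ m %% 6); first by rewrite ltn_pmod.
by rewrite mem_cell -xq mulnC -divn_eq.
Qed.

Lemma cell_bd_eq0 m q : cell_bd q m = 0 -> {in cell q m, forall x, J x = J (q * 6 ^ m)}.
Proof.
elim: m q => [|m IH] q.
  by move=> _ x; rewrite /cell expn0 inE => /eqP ->.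
move/eqP; rewrite -leqn0 => /(leq_trans (cell_bd_children q m)).
rewrite leqn0 sum_nat_eq0 => /forallP zero.
have child_const i : i < 6 -> {in cell (6 * q + i) m, forall x, J x = J ((6 * q + i) * 6 ^ m)}.
  by move=> hi; apply: IH; move: (zero (Ordinal hi)) => /= /eqP; lia.
have first_const i : i < 6 -> J ((6 * q + i) * 6 ^ m) = J (q * 6 ^ m.+1).
  elim: i => [|i IHi] hi; first by rewrite addn0 expnS mulnCA mulnA.
  have hi' : i < 6 by lia.
  have := zero (Ordinal hi'); rewrite /= addn_eq0 => /andP[_].
  rewrite /spoke_cross big_ltn ?expn_gt0 // addn_eq0 eqb0 => /andP[/negPn/eqP same _].
  have ht : 0 < 2 ^ m by rewrite expn_gt0.
  have in_left : spoke_left q m i 0 \in cell (6 * q + i) m by exact: side_face_cell.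
  have in_right : spoke_right q m i 0 \in cell (6 * q + i.+1) m.
    by rewrite /spoke_right (modn_small hi); apply: side_face_cell => //; lia.
  rewrite -(IHi hi') -(child_const i hi' _ in_left) same.
  by rewrite (child_const i.+1 hi _ in_right).
by move=> x /cell_children_mem[i hi hx]; rewrite (child_const i) // first_const.
Qed.

Lemma sum_cell_bd d m q :
  \sum_(0 <= r < 6 ^ d) cell_bd (q * 6 ^ d + r) m <= cell_bd q (m + d).
Proof.
elim: d m => [|d IH] m; first by rewrite expn0 big_nat1 muln1 !addn0.
rewrite addnS -addSn; apply: leq_trans (IH m.+1).
rewrite expnSr big_nat_mul; apply: leq_sum => r _.
have := cell_bd_children (q * 6 ^ d + r) m; rewrite big_split /=.
apply: leq_trans; apply: leq_trans (leq_addr _ _); apply: eq_leq.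
rewrite -{1}[r * 6]add0n big_addn mulSn addnK big_mkord.
by apply: eq_bigr => i _; congr (cell_bd _ m); nia.
Qed.

End CellCounts.

(** * The isoperimetric inequality *)

Lemma size_preim_partition {T : Type} (f : T -> nat) N (s : seq T) :
  all (fun x => f x < N) s -> size s = \sum_(0 <= r < N) count (fun x => f x == r) s.
Proof.
elim: s => [|x s IH] /=; first by rewrite big1.
case/andP => fx /IH ->; rewrite big_split /= -add1n; congr (_ + _).
rewrite (bigD1_seq (f x)) /= ?mem_iota ?iota_uniq ?subn0 // eqxx big1 // => r.
by rewrite eq_sym => /negbTE ->.
Qed.

Lemma leq_pow4_of_bounds {m c l} : 16 ^ l <= m -> m <= c * 6 ^ l -> m <= c ^ 4.
Proof.
move=> h16 hm.
have h6 : (6 ^ l) ^ 4 <= m ^ 3.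
  rewrite expnAC; apply: (@leq_trans ((16 ^ 3) ^ l)).
    by case: l {h16 hm} => // l; rewrite leq_exp2r.
  by rewrite expnAC leq_exp2r.
have : m * (6 ^ l) ^ 4 <= c ^ 4 * (6 ^ l) ^ 4.
  apply: (@leq_trans (m * m ^ 3)); first exact: leq_mul.
  by rewrite -expnS -expnMn leq_exp2r.
by rewrite leq_pmul2r // !expn_gt0.
Qed.

Section Isoperimetry.
Variable J : seq nat.
Hypothesis J_uniq : uniq J.
Let M := (\max_(x <- J) x).+1.

Lemma mem_lt_max {x} : x \in J -> x < 6 ^ M.
Proof.
move=> xJ; apply: leq_ltn_trans (ltn_expl _ (erefl : 1 < 6)).
by apply/ltnW; rewrite ltnS; apply: (@leq_bigmax_seq _ J xpredT id x xJ).
Qed.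

Local Notation inJ := (mem J : pred nat).

(* A full cell of depth l forces 2^l boundary edges in the cell 0 of depth
   l + M + 1, whose side 1 avoids J altogether. *)
Lemma full_cell_bd l r : {subset cell r l <= inJ} -> 2 ^ l <= cell_bd inJ 0 (l + M.+1).
Proof.
move=> full.
have r_lt : r < 6 ^ M.
  have rJ : r * 6 ^ l \in J by apply: full; rewrite mem_cell mulnK ?expn_gt0.
  by apply: leq_ltn_trans _ (mem_lt_max rJ); rewrite leq_pmulr ?expn_gt0.
have := full_cell_side_mass inJ M.+1 l r 1 full isT.
rewrite divn_small; last by apply: leq_trans r_lt _; rewrite leq_exp2l.
suff -> : side_mass inJ 0 (l + M.+1) 1 = 0 by [].
rewrite /side_mass big1_seq // => t _; apply/eqP; rewrite eqb0; apply/negP.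
move/mem_lt_max; rewrite /side_face mul0n add0n addnS ltnNge.
apply/negP/negPn; apply: leq_trans (side_addr_ge _ _ _).
have : 6 ^ M <= 6 ^ (l + M) by rewrite leq_exp2l // leq_addl.
lia.
Qed.

Lemma count_cell_le r l :
  count (fun x => x %/ 6 ^ l == r) J <= has (fun x => x %/ 6 ^ l == r) J * 6 ^ l.
Proof.
case: (boolP (has _ _)) => [_|]; last by rewrite has_count -leqNgt leqn0 => /eqP ->.
rewrite mul1n -size_filter -[X in _ <= X](size_iota (r * 6 ^ l) (6 ^ l)).
apply: uniq_leq_size; first exact: filter_uniq.
by move=> x; rewrite mem_filter => /andP[hx _]; rewrite -/(cell r l) mem_cell.
Qed.

Lemma no_full_cell_bd l : (forall r, r < 6 ^ M -> ~ {subset cell r l <= inJ}) ->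
  size J <= cell_bd inJ 0 (l + M) * 6 ^ l.
Proof.
move=> not_full.
rewrite (size_preim_partition (fun x => x %/ 6 ^ l) (6 ^ M)); last first.
  by apply/allP => x /mem_lt_max; apply: leq_ltn_trans (leq_div _ _).
apply: leq_trans (leq_mul (sum_cell_bd inJ M l 0) (leqnn (6 ^ l))).
rewrite big_distrl /= big_nat [X in _ <= X]big_nat; apply: leq_sum => r /andP[_ hr].
apply: leq_trans (count_cell_le r l) _; rewrite mul0n add0n leq_mul2r; apply/orP; right.
case: (boolP (has _ _)) => //= /hasP[x xJ /eqP xr]; rewrite lt0n; apply/negP => /eqP bd0.
have x_cell : x \in cell r l by rewrite mem_cell xr.
apply: (not_full r hr) => y /(cell_bd_eq0 inJ l r bd0) /= ->.
by have /esym e := cell_bd_eq0 inJ l r bd0 x x_cell; apply: etrans e xJ.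
Qed.

Lemma isoperimetry_nat : J != [::] -> exists L, size J <= 16 * cell_bd inJ 0 L ^ 4.
Proof.
move=> nJ; have m_gt0 : 0 < size J by rewrite lt0n size_eq0.
set l := trunc_log 16 (size J).
have lo := trunc_logP (erefl : 1 < 16) m_gt0.
have hi := trunc_log_ltn (size J) (erefl : 1 < 16).
case: (boolP (has (fun r => all inJ (cell r l)) (iota 0 (6 ^ M)))).
  case/hasP => r _ /allP full; exists (l + M.+1).
  apply: leq_trans (ltnW hi) _; rewrite expnS leq_mul2l /=.
  by rewrite (_ : 16 = 2 ^ 4) // expnAC leq_exp2r // (full_cell_bd l r full).
move/hasPn => not_full; exists (l + M).
have bound : size J <= cell_bd inJ 0 (l + M) * 6 ^ l.
  apply: no_full_cell_bd => r hr /allP full.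
  by have := not_full r; rewrite mem_iota /= full => /(_ hr).
by apply: leq_trans (leq_pow4_of_bounds lo bound) _; rewrite leq_pmull.
Qed.

Lemma boundary_enumeration : exists E : seq (nat * nat),
  [/\ uniq E, forall e, e \in E <-> hex_boundary J e & forall L, cell_bd inJ 0 L <= size E].
Proof.
pose pairs := [seq (a, b) | a <- J, b <- iota 0 (6 ^ M.+1)].
have pairs_uniq : uniq pairs.
  by apply: allpairs_uniq; rewrite ?iota_uniq // => -[? ?] [? ?] _ _ [-> ->].
have nbr_lt u v : u \in J -> hex_adj u v -> v < 6 ^ M.+1.
  by move=> /mem_lt_max; apply: hex_adj_lt.
exists [seq e <- pairs | boundary_pair inJ e]; split.
- exact: filter_uniq pairs_uniq.
- move=> [a b]; rewrite mem_filter /boundary_pair /hex_boundary /=; split.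
    by case/andP => /andP[/andP[aJ bJ] /hex_adjP adj] _.
  move=> [aJ [bJ adj]]; rewrite aJ bJ /=; apply/andP; split; first exact/hex_adjP.
  by apply: allpairs_f => //; rewrite mem_iota add0n (nbr_lt a).
- move=> L; rewrite size_filter /cell_bd /bd_between; apply: count_le_uniq.
    by apply: allpairs_uniq; rewrite ?iota_uniq // => -[? ?] [? ?] _ _ [-> ->].
  move=> [a b] _ /andP[/andP[aJ _] /hex_adjP adj].
  by apply: allpairs_f => //; rewrite mem_iota add0n (nbr_lt a).
Qed.

End Isoperimetry.

Open Scope R_scope.

Lemma root4_bound (m e : nat) : (0 < m)%N -> (m <= 16 * e ^ 4)%N ->
  / 2 * Rpower (INR m) (/ 4) <= INR e.
Proof.
move=> hm he.
have he0 : (0 < e)%N by case: e he => // /(leq_trans hm).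
have hx : 0 < INR e by apply/lt_0_INR/ltP.
have hmr : 0 < INR m by apply/lt_0_INR/ltP.
have hle : INR m <= 16 * INR e ^ 4.
  move/leP/le_INR: he; rewrite !expnS expn0 muln1 -!multE !mult_INR /=; lra.
have root4 y : 0 < y -> Rpower (y ^ 4) (/ 4) = y.
  move=> hy; rewrite -Rpower_pow // Rpower_mult (_ : INR 4 * / 4 = 1) ?Rpower_1 //.
  by rewrite /=; field.
have := Rle_Rpower_l (INR m) (16 * INR e ^ 4) (/ 4) (ltac:(lra)) (conj hmr hle).
rewrite -Rpower_mult_distr; [|lra|apply: pow_lt; lra].
rewrite (_ : 16 = 2 ^ 4); last by rewrite /=; lra.
rewrite !root4 //; lra.
Qed.

Theorem lemma5p4 :
  exists k eps : R, 0 < k /\ 0 < eps /\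
    forall J : seq nat, uniq J -> J <> [::] ->
      exists E : seq (nat * nat),
        uniq E /\ (forall e, e \in E <-> hex_boundary J e) /\
        k * Rpower (INR (size J)) eps <= INR (size E).
Proof.
exists (/ 2), (/ 4); split; first lra; split; first lra.
move=> J uJ /eqP nJ.
have [E [uE memE bdE]] := boundary_enumeration J uJ.
have [L hL] := isoperimetry_nat J uJ nJ.
exists E; split; [exact: uE | split; first exact: memE].
apply: root4_bound; first by rewrite lt0n size_eq0.
by apply: leq_trans hL _; rewrite leq_mul2l /= leq_exp2r.
Qed.
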